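(* Let $(X,d)$ be a proper geodesic metric space with a fixed basepoint $x_0$, let $(T_X,d^* )$ be its end-approximating tree and $f:X\to T_X$, $f(x)=[x]$, the end-approximating map. Then for every proper ray $\gamma$ in $X$, $f\circ\gamma$ is a proper ray in $T_X$, the map $F:\mathrm{Ends}(X)\to\mathrm{Ends}(T_X)$ given by $F(\mathrm{end}(\gamma))=\mathrm{end}(f\circ\gamma)$ is well defined, and $F$ is a homeomorphism.
   Context: End-approximating tree: for $x,y\in X$ let $(x,y)_{x_0}=\frac12(d(x_0,x)+d(x_0,y)-d(x,y))$, let $S_{x,y}$ be the set of finite sequences $x=x_1,\ldots,x_n=y$ in $X$, set $(x,y)'_{x_0}=\sup_{S_{x,y}}\min_{1\leqslant i\leqslant n-1}(x_i,x_{i+1})_{x_0}$ and $d'(x,y)=d(x_0,x)+d(x_0,y)-2(x,y)'_{x_0}$ (a pseudometric). $T_X$ is the quotient $X/\sim$ where $x\sim y$ iff $d'(x,y)=0$, with metric $d^*([x],[y])=d'(x,y)$. A proper ray in a proper metric space $Y$ with basepoint $y_0$ is a continuous $\gamma:[0,\infty)\to Y$ such that $\gamma^{-1}(B(y_0,r))$ is bounded for every $r\geqslant 0$. Proper rays $\gamma_1,\gamma_2$ converge to the same end if for every $r\geqslant0$ there is $t\geqslant0$ with $\gamma_1([t,\infty))$ and $\gamma_2([t,\infty))$ in the same path component of $Y\setminus B(y_0,r)$; $\mathrm{end}(\gamma)$ denotes the equivalence class and $\mathrm{Ends}(Y)$ the set of classes. Its topology is induced by the convergence: $\mathrm{end}(\gamma_n)\to\mathrm{end}(\gamma)$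 iff for every $r\geqslant0$ there are reals $N_n$ such that $\gamma_n([N_n,\infty))$ and $\gamma([N_n,\infty))$ lie in the same path component of $Y\setminus B(y_0,r)$ for all sufficiently large $n$. The basepoint of $T_X$ is $[x_0]$. *)

From Stdlib Require Import Reals List Lra ClassicalEpsilon.
Open Scope R_scope.

Section MetricNotions.
Variables (Y : Type) (dY : Y -> Y -> R).

Definition is_metric : Prop :=
  (forall x y, dY x y = 0 <-> x = y) /\
  (forall x y, dY x y = dY y x) /\
  (forall x y z, dY x z <= dY x y + dY y z).

Definition is_open (U : Y -> Prop) : Prop :=
  forall x, U x -> exists e, 0 < e /\ forall y, dY x y < e -> U y.

Definition compact (K : Y -> Prop) : Prop :=
  forall (I : Type) (U : I -> Y -> Prop),
    (forall i, is_open (U i)) ->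
    (forall x, K x -> exists i, U i x) ->
    exists l : list I, forall x, K x -> exists i, In i l /\ U i x.

Definition closed_ball (y : Y) (r : R) : Y -> Prop := fun z => dY y z <= r.

Definition proper_space : Prop :=
  forall y r, compact (closed_ball y r).

Definition geodesic : Prop :=
  forall x y, exists c : R -> Y,
    c 0 = x /\ c (dY x y) = y /\
    forall s t, 0 <= s <= dY x y -> 0 <= t <= dY x y ->
      dY (c s) (c t) = Rabs (s - t).

Definition cont_on (I : R -> Prop) (c : R -> Y) : Prop :=
  forall t, I t -> forall eps, 0 < eps -> exists delta, 0 < delta /\
    forall s, I s -> Rabs (s - t) < delta -> dY (c s) (c t) < eps.

Definition path_conn (S : Y -> Prop) (a b : Y) : Prop :=
  exists c : R -> Y, cont_on (fun s => 0 <= s <= 1) c /\ c 0 = a /\ c 1 = b /\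
    forall s, 0 <= s <= 1 -> S (c s).

Definition same_path_comp (S A B : Y -> Prop) : Prop :=
  (exists a, A a) /\ (exists b, B b) /\
  forall a b, A a -> B b -> path_conn S a b.

Variable y0 : Y.

Definition outside_ball (r : R) : Y -> Prop := fun y => r <= dY y0 y.

Definition tail (g : R -> Y) (t : R) : Y -> Prop :=
  fun y => exists s, 0 <= s /\ t <= s /\ y = g s.

(** proper rays gamma : [0,oo) -> Y (values at negative times are irrelevant) *)
Definition proper_ray (g : R -> Y) : Prop :=
  cont_on (fun t => 0 <= t) g /\
  forall r, 0 <= r -> exists M, forall t, 0 <= t -> dY y0 (g t) < r -> t <= M.

Definition same_end (g1 g2 : R -> Y) : Prop :=
  forall r, 0 <= r -> exists t, 0 <= t /\
    same_path_comp (outside_ball r) (tail g1 t) (tail g2 t).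

Definition end_conv (gs : nat -> R -> Y) (g : R -> Y) : Prop :=
  forall r, 0 <= r -> exists N : nat -> R, exists K : nat, forall n, (K <= n)%nat ->
    same_path_comp (outside_ball r) (tail (gs n) (N n)) (tail g (N n)).

(** open subsets of Ends(Y), represented as saturated predicates on proper rays;
    the topology is the one induced by the convergence end_conv
    (a set is open iff every sequence converging to a point of it eventually
    lies in it). *)
Definition ends_open (U : (R -> Y) -> Prop) : Prop :=
  (forall g, U g -> proper_ray g) /\
  (forall g g', proper_ray g' -> same_end g g' -> U g -> U g') /\
  (forall (gs : nat -> R -> Y) g, (forall n, proper_ray (gs n)) -> proper_ray g ->
     end_conv gs g -> U g -> exists K : nat, forall n, (K <= n)%nat -> U (gs n)).

End MetricNotions.

Arguments is_metric {Y}. Arguments is_open {Y}. Arguments compact {Y}.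
Arguments closed_ball {Y}. Arguments proper_space {Y}. Arguments geodesic {Y}.
Arguments cont_on {Y}. Arguments path_conn {Y}. Arguments same_path_comp {Y}.
Arguments outside_ball {Y}. Arguments tail {Y}. Arguments proper_ray {Y}.
Arguments same_end {Y}. Arguments end_conv {Y}. Arguments ends_open {Y}.

Section EATree.
Variables (X : Type) (d : X -> X -> R) (x0 : X).

Definition gprod (x y : X) : R := (d x0 x + d x0 y - d x y) / 2.

Fixpoint chain_min (x : X) (l : list X) (y : X) : R :=
  match l with
  | nil => gprod x y
  | z :: l' => Rmin (gprod x z) (chain_min z l' y)
  end.

Definition gprod' (x y : X) : R :=
  epsilon (inhabits 0)
    (fun s => is_lub (fun v => exists l, v = chain_min x l y) s).

Definition dprime (x y : X) : R := d x0 x + d x0 y - 2 * gprod' x y.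

Definition eclass (x : X) : X -> Prop := fun y => dprime x y = 0.

Definition TX : Type := { A : X -> Prop | exists x, A = eclass x }.

Definition eaf (x : X) : TX := exist _ (eclass x) (ex_intro _ x eq_refl).

Definition TX_rep (A : TX) : X :=
  proj1_sig (constructive_indefinite_description _ (proj2_sig A)).

Definition dstar (A B : TX) : R := dprime (TX_rep A) (TX_rep B).

End EATree.
Arguments gprod {X}. Arguments chain_min {X}. Arguments gprod' {X}.
Arguments dprime {X}. Arguments eclass {X}. Arguments TX {X}. Arguments eaf {X}.
Arguments TX_rep {X d x0}. Arguments dstar {X}.

(** Idea: (x,y)' is ultrametric and measures how far from x0 one can travel
    from x to y.  In a geodesic space the segment [x,y] avoids the open ball
    B(x0, (x,y)), so chains of segments join x to y outside B(x0, r) whenever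
    r < (x,y)'; conversely a path outside B(x0, r) forces r <= (x,y)'.  In T_X
    the Gromov product of [x] and [y] is (x,y)' and d*-paths are d'-continuous
    paths of representatives, so the same holds there.  Thus, in both spaces,
    two rays define the same end (or ends converge) exactly when (.,.)' of their
    far points tends to infinity, and f preserves (.,.)'.  A ray b in T_X is
    lifted by joining representatives of b(0), b(1), ... in this way. *)

From Stdlib Require Import Reals Lra Lia ZArith ClassicalEpsilon ProofIrrelevance Classical.
Open Scope R_scope.

Lemma interval_chain (a b : R) (P : R -> Prop) (Q : R -> R -> Prop) :
  a <= b -> P a ->
  (forall u v, a <= u <= b -> a <= v <= b -> P u -> Q u v -> P v) ->
  (forall m, a <= m <= b -> exists del, 0 < del /\
     forall u v, a <= u <= b -> a <= v <= b -> Rabs (u - m) < del -> Rabs (v - m) < del -> Q u v) ->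
  P b.
Proof.
  intros Hab Pa HPQ Hloc.
  destruct (completeness (fun u => a <= u <= b /\ P u)) as [m [Hub Hlub]].
  { exists b. intros u [Hu _]. lra. }
  { exists a. split; [lra | exact Pa]. }
  assert (Ham : a <= m) by (apply Hub; split; [lra | exact Pa]).
  assert (Hmb : m <= b) by (apply Hlub; intros u [Hu _]; lra).
  destruct (Hloc m (conj Ham Hmb)) as [del [Hdel HQ]].
  assert (Hnear : exists u, (a <= u <= b /\ P u) /\ m - del < u).
  { apply NNPP; intro Hno.
    assert (m <= m - del); [|lra].
    apply Hlub; intros u Su. apply Rnot_lt_le; intro; apply Hno; eauto. }
  destruct Hnear as [u [[Hu Pu] Hmu]].
  assert (Hum : u <= m) by (apply Hub; split; assumption).
  set (v := Rmin (m + del / 2) b).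
  assert (Hv : m <= v <= m + del / 2 /\ v <= b).
  { unfold v; split; [split|]; [apply Rmin_glb; lra | apply Rmin_l | apply Rmin_r]. }
  assert (Pv : P v).
  { apply (HPQ u v); try lra; [exact Pu|].
    apply HQ; try lra; apply Rabs_def1; lra. }
  destruct (Rle_dec (m + del / 2) b) as [Hle | Hgt].
  - assert (v <= m) by (apply Hub; split; [lra | exact Pv]).
    unfold v in *; rewrite Rmin_left in * by lra; lra.
  - unfold v in Pv; rewrite Rmin_right in Pv by lra; exact Pv.
Qed.

Definition nat_floor (t : R) : nat := Z.to_nat (Int_part t).

Lemma nat_floor_spec t : 0 <= t -> INR (nat_floor t) <= t < INR (nat_floor t) + 1.
Proof.
  intros Ht. destruct (base_Int_part t) as [H1 H2]. unfold nat_floor.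
  assert (H3 : (-1 < Int_part t)%Z) by (apply lt_IZR; simpl; lra).
  rewrite INR_IZR_INZ, Z2Nat.id by lia. lra.
Qed.

Section ContinuityOn.
Variables (Y : Type) (dY : Y -> Y -> R).

Lemma cont_on_ext (I : R -> Prop) (c c' : R -> Y) :
  (forall s, I s -> c s = c' s) -> cont_on dY I c' -> cont_on dY I c.
Proof.
  intros E C t It eps He. destruct (C t It eps He) as [del [Hd H]].
  exists del; split; [exact Hd|]. intros s Is Hs. rewrite !E; auto.
Qed.

Lemma cont_on_sub (I J : R -> Prop) (c : R -> Y) :
  (forall s, J s -> I s) -> cont_on dY I c -> cont_on dY J c.
Proof.
  intros HJ C t Jt eps He. destruct (C t (HJ t Jt) eps He) as [del [Hd H]].
  exists del; split; auto.
Qed.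

Lemma cont_on_lipschitz (I : R -> Prop) (c : R -> Y) (L : R) : 0 <= L ->
  (forall s t, I s -> I t -> dY (c s) (c t) <= L * Rabs (s - t)) -> cont_on dY I c.
Proof.
  intros HL Hc t It eps He. exists (eps / (L + 1)). split.
  { apply Rdiv_lt_0_compat; lra. }
  intros s Is Hst.
  assert (Hlt : Rabs (s - t) * (L + 1) < eps).
  { apply Rmult_lt_reg_r with (/ (L + 1)); [apply Rinv_0_lt_compat; lra|].
    replace (Rabs (s - t) * (L + 1) * / (L + 1)) with (Rabs (s - t)) by (field; lra).
    exact Hst. }
  pose proof (Hc s t Is It). pose proof (Rabs_pos (s - t)). nra.
Qed.

Lemma cont_on_affine (I J : R -> Prop) (c : R -> Y) a b :
  (forall s, J s -> I (a * s + b)) -> cont_on dY I c -> cont_on dY J (fun s => c (a * s + b)).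
Proof.
  intros HJ C t Jt eps He.
  destruct (C (a * t + b) (HJ t Jt) eps He) as [del [Hd H]].
  pose proof (Rabs_pos a) as Ha.
  exists (del / (Rabs a + 1)). split; [apply Rdiv_lt_0_compat; lra|].
  intros s Js Hs. apply H; [auto|].
  replace (a * s + b - (a * t + b)) with (a * (s - t)) by ring.
  rewrite Rabs_mult.
  assert (Hlt : Rabs (s - t) * (Rabs a + 1) < del).
  { apply Rmult_lt_reg_r with (/ (Rabs a + 1)); [apply Rinv_0_lt_compat; lra|].
    replace (Rabs (s - t) * (Rabs a + 1) * / (Rabs a + 1)) with (Rabs (s - t)) by (field; lra).
    exact Hs. }
  pose proof (Rabs_pos (s - t)). nra.
Qed.

Lemma cont_on_glue (c : R -> Y) a m b :
  cont_on dY (fun s => a <= s <= m) c -> cont_on dY (fun s => m <= s <= b) c ->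
  cont_on dY (fun s => a <= s <= b) c.
Proof.
  intros C1 C2 t Ht eps He.
  destruct (total_order_T t m) as [[Hlt | Heq] | Hgt].
  - destruct (C1 t ltac:(lra) eps He) as [d1 [Hd1 H1]].
    exists (Rmin d1 (m - t)). split; [apply Rmin_glb_lt; lra|].
    intros s Hs Hst. pose proof (Rmin_l d1 (m - t)). pose proof (Rmin_r d1 (m - t)).
    apply Rabs_def2 in Hst. apply H1; [lra | apply Rabs_def1; lra].
  - destruct (C1 t ltac:(lra) eps He) as [d1 [Hd1 H1]].
    destruct (C2 t ltac:(lra) eps He) as [d2 [Hd2 H2]].
    exists (Rmin d1 d2). split; [apply Rmin_glb_lt; lra|].
    intros s Hs Hst. pose proof (Rmin_l d1 d2). pose proof (Rmin_r d1 d2).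
    apply Rabs_def2 in Hst. destruct (Rle_dec s m).
    + apply H1; [lra | apply Rabs_def1; lra].
    + apply H2; [lra | apply Rabs_def1; lra].
  - destruct (C2 t ltac:(lra) eps He) as [d2 [Hd2 H2]].
    exists (Rmin d2 (t - m)). split; [apply Rmin_glb_lt; lra|].
    intros s Hs Hst. pose proof (Rmin_l d2 (t - m)). pose proof (Rmin_r d2 (t - m)).
    apply Rabs_def2 in Hst. apply H2; [lra | apply Rabs_def1; lra].
Qed.

Lemma cont_on_nonexpansive (Z : Type) (dZ : Z -> Z -> R) (h : Y -> Z) (I : R -> Prop) (c : R -> Y) :
  (forall y y', dZ (h y) (h y') <= dY y y') -> cont_on dY I c -> cont_on dZ I (fun s => h (c s)).
Proof.
  intros Hh C t It eps He. destruct (C t It eps He) as [del [Hd H]].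
  exists del; split; [exact Hd|]. intros s Is Hs. eapply Rle_lt_trans; [apply Hh | auto].
Qed.

Lemma path_conn_trans (S : Y -> Prop) a b c :
  path_conn dY S a b -> path_conn dY S b c -> path_conn dY S a c.
Proof.
  intros [c1 [C1 [E10 [E11 S1]]]] [c2 [C2 [E20 [E21 S2]]]].
  exists (fun s => if Rle_dec s (1 / 2) then c1 (2 * s) else c2 (2 * s - 1)).
  split; [|split; [|split]].
  - apply cont_on_glue with (1 / 2).
    + apply cont_on_ext with (fun s => c1 (2 * s + 0)).
      { intros s Hs. destruct (Rle_dec s (1 / 2)); [f_equal; ring | lra]. }
      apply cont_on_affine with (fun s => 0 <= s <= 1); [intros; lra | exact C1].
    + apply cont_on_ext with (fun s => c2 (2 * s + -1)).
      { intros s Hs. destruct (Rle_dec s (1 / 2)).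
        - replace s with (1 / 2) by lra.
          replace (2 * (1 / 2)) with 1 by field. replace (1 + -1) with 0 by ring.
          congruence.
        - f_equal; ring. }
      apply cont_on_affine with (fun s => 0 <= s <= 1); [intros; lra | exact C2].
  - destruct (Rle_dec 0 (1 / 2)); [|lra]. rewrite Rmult_0_r; auto.
  - destruct (Rle_dec 1 (1 / 2)); [lra|]. replace (2 * 1 - 1) with 1 by ring; auto.
  - intros s Hs. destruct (Rle_dec s (1 / 2)); [apply S1 | apply S2]; lra.
Qed.

Section Concatenation.
Variable p : nat -> R -> Y.
Hypothesis p_cont : forall n, cont_on dY (fun s => 0 <= s <= 1) (p n).
Hypothesis p_link : forall n, p n 1 = p (S n) 0.

Definition concat_paths (t : R) : Y := p (nat_floor t) (t - INR (nat_floor t)).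

Lemma concat_paths_on n s : INR n <= s <= INR n + 1 -> concat_paths s = p n (s - INR n).
Proof.
  intros Hs. unfold concat_paths.
  pose proof (nat_floor_spec s ltac:(pose proof (pos_INR n); lra)) as Hf.
  assert (Hlt : (n < S (nat_floor s))%nat) by (apply INR_lt; rewrite S_INR; lra).
  assert (Hle : (nat_floor s <= S n)%nat) by (apply INR_le; rewrite S_INR; lra).
  destruct (Nat.eq_dec (nat_floor s) n) as [-> | Hne]; [reflexivity|].
  assert (E : nat_floor s = S n) by lia. rewrite E in *. rewrite S_INR in *.
  replace (s - (INR n + 1)) with 0 by lra. replace (s - INR n) with 1 by lra.
  symmetry; apply p_link.
Qed.

Lemma cont_on_concat_paths_segment n :
  cont_on dY (fun s => INR n <= s <= INR n + 1) concat_paths.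
Proof.
  apply cont_on_ext with (fun s => p n (1 * s + - INR n)).
  { intros s Hs. rewrite (concat_paths_on n s Hs). f_equal; ring. }
  apply cont_on_affine with (fun s => 0 <= s <= 1); [intros; lra | apply p_cont].
Qed.

Lemma cont_on_concat_paths : cont_on dY (fun t => 0 <= t) concat_paths.
Proof.
  assert (Cn : forall k, cont_on dY (fun s => 0 <= s <= INR (S k)) concat_paths).
  { induction k as [|k IH].
    - apply cont_on_sub with (fun s => INR 0 <= s <= INR 0 + 1);
        [simpl; intros; lra | apply cont_on_concat_paths_segment].
    - apply cont_on_glue with (INR (S k)); [exact IH|].
      rewrite (S_INR (S k)). apply cont_on_concat_paths_segment. }
  intros t Ht eps He. pose proof (nat_floor_spec t Ht) as Hf.
  destruct (Cn (S (nat_floor t)) t) with eps as [del [Hd H]]; [rewrite !S_INR; lra | exact He|].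
  exists (Rmin del 1). split; [apply Rmin_glb_lt; lra|].
  intros s Hs Hst. pose proof (Rmin_l del 1). pose proof (Rmin_r del 1).
  apply Rabs_def2 in Hst as Hst'. apply H; [rewrite !S_INR; lra | lra].
Qed.

End Concatenation.
End ContinuityOn.

Definition diverges (F : R -> R -> R) : Prop :=
  forall r, 0 <= r -> exists t, 0 <= t /\ forall s s', t <= s -> t <= s' -> r <= F s s'.

Definition diverges_seq (F : nat -> R -> R -> R) : Prop :=
  forall r, 0 <= r -> exists (N : nat -> R) (K : nat), forall n, (K <= n)%nat ->
    forall s s', 0 <= s -> N n <= s -> 0 <= s' -> N n <= s' -> r <= F n s s'.

Lemma diverges_ext F G : (forall s s', F s s' = G s s') -> diverges F -> diverges G.
Proof.
  intros E H r Hr. destruct (H r Hr) as [t [Ht Hg]].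
  exists t. split; [exact Ht|]. intros s s' Hs Hs'. rewrite <- E. auto.
Qed.

Lemma diverges_seq_ext F G :
  (forall n s s', F n s s' = G n s s') -> diverges_seq F -> diverges_seq G.
Proof.
  intros E H r Hr. destruct (H r Hr) as [N [K Hg]].
  exists N, K. intros n Hn s s' Hs Hts Hs' Hts'. rewrite <- E. auto.
Qed.

Section EndsByGauge.
Variables (Y : Type) (dY : Y -> Y -> R) (y0 : Y) (phi : Y -> Y -> R).
Hypothesis path_le_gauge :
  forall r a b, path_conn dY (outside_ball dY y0 r) a b -> r <= phi a b.
Hypothesis gauge_path :
  forall r a b, r < phi a b -> path_conn dY (outside_ball dY y0 r) a b.

Lemma same_path_comp_tails_le g1 g2 t r :
  same_path_comp dY (outside_ball dY y0 r) (tail g1 t) (tail g2 t) ->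
  forall s s', 0 <= s -> t <= s -> 0 <= s' -> t <= s' -> r <= phi (g1 s) (g2 s').
Proof.
  intros [_ [_ H]] s s' Hs Hts Hs' Hts'.
  apply path_le_gauge, H; [exists s | exists s']; auto.
Qed.

Lemma lt_gauge_same_path_comp_tails g1 g2 t r :
  (forall s s', 0 <= s -> t <= s -> 0 <= s' -> t <= s' -> r < phi (g1 s) (g2 s')) ->
  same_path_comp dY (outside_ball dY y0 r) (tail g1 t) (tail g2 t).
Proof.
  intros H. split; [|split].
  - exists (g1 (Rmax 0 t)), (Rmax 0 t). repeat split; [apply Rmax_l | apply Rmax_r].
  - exists (g2 (Rmax 0 t)), (Rmax 0 t). repeat split; [apply Rmax_l | apply Rmax_r].
  - intros a b [s [? [? ->]]] [s' [? [? ->]]]. apply gauge_path, H; auto.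
Qed.

Lemma same_end_iff_diverges g1 g2 :
  same_end dY y0 g1 g2 <-> diverges (fun s s' => phi (g1 s) (g2 s')).
Proof.
  split.
  - intros H r Hr. destruct (H r Hr) as [t [Ht Hc]]. exists t. split; [exact Ht|].
    intros s s' Hs Hs'. apply (same_path_comp_tails_le _ _ _ _ Hc); lra.
  - intros H r Hr. destruct (H (r + 1) ltac:(lra)) as [t [Ht Hg]]. exists t. split; [exact Ht|].
    apply lt_gauge_same_path_comp_tails. intros s s' _ Hs _ Hs'.
    specialize (Hg s s' Hs Hs'). lra.
Qed.

Lemma end_conv_iff_diverges_seq gs g :
  end_conv dY y0 gs g <-> diverges_seq (fun n s s' => phi (gs n s) (g s')).
Proof.
  split.
  - intros H r Hr. destruct (H r Hr) as [N [K Hc]]. exists N, K. intros n Hn.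
    exact (same_path_comp_tails_le _ _ _ _ (Hc n Hn)).
  - intros H r Hr. destruct (H (r + 1) ltac:(lra)) as [N [K Hg]]. exists N, K. intros n Hn.
    apply lt_gauge_same_path_comp_tails. intros s s' Hs Hts Hs' Hts'.
    specialize (Hg n Hn s s' Hs Hts Hs' Hts'). lra.
Qed.

Lemma proper_ray_diverges b : proper_ray dY y0 b -> diverges (fun u v => phi (b u) (b v)).
Proof.
  intros [Cb Pb] r Hr. destruct (Pb r Hr) as [M HM].
  exists (Rmax M 0 + 1). pose proof (Rmax_l M 0). pose proof (Rmax_r M 0).
  split; [lra|]. intros u v Hu Hv.
  assert (Hseg : forall s, 0 <= s <= 1 -> Rmax M 0 + 1 <= (v - u) * s + u).
  { intros s Hs. destruct (Rle_dec u v); nra. }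
  apply path_le_gauge. exists (fun s => b ((v - u) * s + u)).
  split; [|split; [|split]]; cbv beta.
  - apply cont_on_affine with (fun t => 0 <= t); [intros s Hs; specialize (Hseg s Hs); lra | exact Cb].
  - f_equal; ring.
  - f_equal; ring.
  - intros s Hs. specialize (Hseg s Hs). unfold outside_ball. apply Rnot_lt_le; intro Hlt.
    specialize (HM ((v - u) * s + u) ltac:(lra) Hlt). lra.
Qed.

Section Ultrametric.
Hypothesis gauge_sym : forall a b, phi a b = phi b a.
Hypothesis gauge_ultra : forall r a b c, r <= phi a b -> r <= phi b c -> r <= phi a c.

Lemma same_end_sym g1 g2 : same_end dY y0 g1 g2 -> same_end dY y0 g2 g1.
Proof.
  rewrite !same_end_iff_diverges. intros H r Hr. destruct (H r Hr) as [t [Ht Hg]].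
  exists t. split; [exact Ht|]. intros s s' Hs Hs'. rewrite gauge_sym. auto.
Qed.

Lemma same_end_trans g1 g2 g3 :
  same_end dY y0 g1 g2 -> same_end dY y0 g2 g3 -> same_end dY y0 g1 g3.
Proof.
  rewrite !same_end_iff_diverges. intros H12 H23 r Hr.
  destruct (H12 r Hr) as [t1 [Ht1 Hg1]]. destruct (H23 r Hr) as [t2 [Ht2 Hg2]].
  pose proof (Rmax_l t1 t2). pose proof (Rmax_r t1 t2).
  exists (Rmax t1 t2). split; [lra|]. intros s s' Hs Hs'.
  apply gauge_ultra with (g2 (Rmax t1 t2)); [apply Hg1 | apply Hg2]; lra.
Qed.

Lemma end_conv_same_end gs g hs h :
  end_conv dY y0 gs g -> (forall n, same_end dY y0 (gs n) (hs n)) -> same_end dY y0 g h ->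
  end_conv dY y0 hs h.
Proof.
  rewrite !end_conv_iff_diverges_seq. intros Hc Hn Hgh.
  setoid_rewrite same_end_iff_diverges in Hn. rewrite same_end_iff_diverges in Hgh.
  intros r Hr. destruct (Hc r Hr) as [N [K HN]]. destruct (Hgh r Hr) as [t [Ht Hgt]].
  destruct (choice (fun n tn => 0 <= tn /\ forall s s', tn <= s -> tn <= s' ->
                       r <= phi (gs n s) (hs n s')) (fun n => Hn n r Hr)) as [tn Htn].
  exists (fun n => Rmax (Rmax (N n) (tn n)) (Rmax t 0)), K. intros n Hn' s s' _ Hs _ Hs'.
  pose proof (Rmax_l (Rmax (N n) (tn n)) (Rmax t 0)).
  pose proof (Rmax_r (Rmax (N n) (tn n)) (Rmax t 0)).
  pose proof (Rmax_l (N n) (tn n)). pose proof (Rmax_r (N n) (tn n)).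
  pose proof (Rmax_l t 0). pose proof (Rmax_r t 0).
  set (m := Rmax (Rmax (N n) (tn n)) (Rmax t 0)) in *.
  apply gauge_ultra with (gs n m); [rewrite gauge_sym; apply Htn; lra|].
  apply gauge_ultra with (g m); [apply (HN n Hn'); lra | apply Hgt; lra].
Qed.

End Ultrametric.
End EndsByGauge.

Section EndApproximatingTree.
Variables (X : Type) (d : X -> X -> R) (x0 : X).
Hypothesis Hmet : is_metric d.

Local Notation gp := (gprod d x0).
Local Notation gp' := (gprod' d x0).
Local Notation dp := (dprime d x0).
Local Notation nx x := (d x0 x).

Lemma dist_refl x : d x x = 0.
Proof. apply (proj1 Hmet); reflexivity. Qed.

Lemma dist_sym x y : d x y = d y x.
Proof. apply (proj1 (proj2 Hmet)). Qed.

Lemma dist_triangle x y z : d x z <= d x y + d y z.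
Proof. apply (proj2 (proj2 Hmet)). Qed.

Lemma gprod_le_l x y : gp x y <= nx x.
Proof. unfold gprod. pose proof (dist_triangle x0 x y). lra. Qed.

Lemma gprod_le_r x y : gp x y <= nx y.
Proof. unfold gprod. pose proof (dist_triangle x0 y x). rewrite (dist_sym y x) in *. lra. Qed.

Lemma gprod_sym x y : gp x y = gp y x.
Proof. unfold gprod. rewrite (dist_sym x y). lra. Qed.

Lemma chain_min_le_l x l y : chain_min d x0 x l y <= nx x.
Proof.
  destruct l; simpl; [apply gprod_le_l|].
  eapply Rle_trans; [apply Rmin_l | apply gprod_le_l].
Qed.

Lemma chain_min_le_r x l y : chain_min d x0 x l y <= nx y.
Proof.
  revert x; induction l as [|z l IH]; intros x; simpl; [apply gprod_le_r|].
  eapply Rle_trans; [apply Rmin_r | apply IH].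
Qed.

Lemma chain_min_app x l1 y l2 z :
  chain_min d x0 x (l1 ++ y :: l2) z = Rmin (chain_min d x0 x l1 y) (chain_min d x0 y l2 z).
Proof.
  revert x; induction l1 as [|w l1 IH]; intros x; simpl; [reflexivity|].
  rewrite IH. apply Rmin_assoc.
Qed.

Lemma chain_min_rev x l y : chain_min d x0 x l y = chain_min d x0 y (List.rev l) x.
Proof.
  revert x; induction l as [|z l IH]; intros x; simpl; [apply gprod_sym|].
  rewrite IH, chain_min_app. simpl. rewrite Rmin_comm, gprod_sym. reflexivity.
Qed.

Lemma gprod'_is_lub x y : is_lub (fun v => exists l, v = chain_min d x0 x l y) (gp' x y).
Proof.
  unfold gprod'. apply epsilon_spec.
  destruct (completeness (fun v => exists l, v = chain_min d x0 x l y)) as [m Hm].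
  - exists (nx x). intros v [l ->]. apply chain_min_le_l.
  - exists (gp x y), nil. reflexivity.
  - exists m; exact Hm.
Qed.

Lemma chain_min_le_gprod' x l y : chain_min d x0 x l y <= gp' x y.
Proof. apply (proj1 (gprod'_is_lub x y)). eauto. Qed.

Lemma gprod_le_gprod' x y : gp x y <= gp' x y.
Proof. exact (chain_min_le_gprod' x nil y). Qed.

Lemma gprod'_le_l x y : gp' x y <= nx x.
Proof. apply (proj2 (gprod'_is_lub x y)). intros v [l ->]. apply chain_min_le_l. Qed.

Lemma gprod'_le_r x y : gp' x y <= nx y.
Proof. apply (proj2 (gprod'_is_lub x y)). intros v [l ->]. apply chain_min_le_r. Qed.

Lemma lt_gprod'_chain x y v : v < gp' x y -> exists l, v < chain_min d x0 x l y.
Proof.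
  intros Hv. apply NNPP; intro Hno.
  assert (gp' x y <= v); [|lra].
  apply (proj2 (gprod'_is_lub x y)). intros w [l ->].
  apply Rnot_lt_le; intro; apply Hno; eauto.
Qed.

Lemma gprod'_sym x y : gp' x y = gp' y x.
Proof.
  assert (H : forall x y, gp' x y <= gp' y x).
  { intros a b. apply (proj2 (gprod'_is_lub a b)). intros w [l ->].
    rewrite chain_min_rev. apply chain_min_le_gprod'. }
  apply Rle_antisym; apply H.
Qed.

Lemma gprod'_ultra r x y z : r <= gp' x y -> r <= gp' y z -> r <= gp' x z.
Proof.
  intros Hxy Hyz. apply Rnot_lt_le; intro Hlt.
  destruct (lt_gprod'_chain x y (gp' x z)) as [l1 H1]; [lra|].
  destruct (lt_gprod'_chain y z (gp' x z)) as [l2 H2]; [lra|].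
  pose proof (chain_min_le_gprod' x (l1 ++ y :: l2) z) as H. rewrite chain_min_app in H.
  pose proof (Rmin_glb_lt _ _ _ H1 H2). lra.
Qed.

Lemma gprod'_diag x : gp' x x = nx x.
Proof.
  apply Rle_antisym; [apply gprod'_le_l|].
  replace (nx x) with (gp x x) by (unfold gprod; rewrite dist_refl; lra).
  apply gprod_le_gprod'.
Qed.

Lemma gprod'_base y : gp' x0 y = 0.
Proof.
  apply Rle_antisym; [rewrite <- (dist_refl x0); apply gprod'_le_l|].
  replace 0 with (gp x0 y) by (unfold gprod; rewrite dist_refl; lra).
  apply gprod_le_gprod'.
Qed.

Lemma gprod'_dprime x y : gp' x y = (nx x + nx y - dp x y) / 2.
Proof. unfold dprime. lra. Qed.

Lemma dprime_sym x y : dp x y = dp y x.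
Proof. unfold dprime. rewrite gprod'_sym. lra. Qed.

Lemma dprime_diag x : dp x x = 0.
Proof. unfold dprime. rewrite gprod'_diag. lra. Qed.

Lemma dprime_le_dist x y : dp x y <= d x y.
Proof.
  unfold dprime. pose proof (gprod_le_gprod' x y) as H. unfold gprod in H. lra.
Qed.

Lemma dprime_base y : dp x0 y = nx y.
Proof. unfold dprime. rewrite gprod'_base, dist_refl. lra. Qed.

Lemma dprime_triangle x y z : dp x z <= dp x y + dp y z.
Proof.
  unfold dprime.
  pose proof (gprod'_le_r x y). pose proof (gprod'_le_l y z).
  destruct (Rle_dec (gp' x y) (gp' y z)).
  - pose proof (gprod'_ultra (gp' x y) x y z). lra.
  - pose proof (gprod'_ultra (gp' y z) x y z). lra.
Qed.

Lemma dprime_eq_l x x' y : dp x x' = 0 -> dp x y = dp x' y.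
Proof.
  intros H. pose proof (dprime_triangle x x' y). pose proof (dprime_triangle x' x y).
  pose proof (dprime_sym x x'). lra.
Qed.

Lemma gprod'_eq_l x x' y : dp x x' = 0 -> gp' x y = gp' x' y.
Proof.
  intros H. rewrite !gprod'_dprime, (dprime_eq_l x x' y H).
  rewrite <- (dprime_base x), <- (dprime_base x'), (dprime_sym x0 x), (dprime_sym x0 x').
  rewrite (dprime_eq_l x x' x0 H). reflexivity.
Qed.

(** Nearby points far from [x0] have a large [gp']; the ultrametric inequality
    then propagates a lower bound along any [dp]-continuous path. *)
Lemma le_gprod'_of_path (c : R -> X) a b r : a <= b ->
  cont_on dp (fun s => a <= s <= b) c -> (forall s, a <= s <= b -> r <= nx (c s)) ->
  r <= gp' (c a) (c b).
Proof.
  intros Hab Hc Hr.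
  enough (H : forall eps, 0 < eps -> r - eps <= gp' (c a) (c b)).
  { apply Rnot_lt_le; intro Hlt. specialize (H ((r - gp' (c a) (c b)) / 2) ltac:(lra)). lra. }
  intros eps Heps.
  apply (interval_chain a b (fun u => r - eps <= gp' (c a) (c u))
                            (fun u v => dp (c u) (c v) < 2 * eps)); [exact Hab | | |].
  - rewrite gprod'_diag. specialize (Hr a ltac:(lra)). lra.
  - intros u v Hu Hv Pu Quv. apply gprod'_ultra with (c u); [exact Pu|].
    rewrite gprod'_dprime. pose proof (Hr u Hu). pose proof (Hr v Hv). lra.
  - intros m Hm. destruct (Hc m Hm eps Heps) as [del [Hdel Hcl]].
    exists del. split; [exact Hdel|]. intros u v Hu Hv Hum Hvm.
    pose proof (dprime_triangle (c u) (c m) (c v)). rewrite (dprime_sym (c m)) in *.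
    pose proof (Hcl u Hu Hum). pose proof (Hcl v Hv Hvm). lra.
Qed.

Lemma cont_on_dprime I c : cont_on d I c -> cont_on dp I c.
Proof. exact (cont_on_nonexpansive X d X dp (fun x => x) I c dprime_le_dist). Qed.

Lemma path_le_gprod' r x y : path_conn d (outside_ball d x0 r) x y -> r <= gp' x y.
Proof.
  intros [c [Cc [E0 [E1 Sc]]]]. rewrite <- E0, <- E1.
  apply le_gprod'_of_path; [lra | apply cont_on_dprime, Cc | exact Sc].
Qed.

Hypothesis Hgeo : geodesic d.

Lemma geodesic_path_outside x y r : r <= gp x y -> path_conn d (outside_ball d x0 r) x y.
Proof.
  intros Hr. destruct (Hgeo x y) as [c [Ec0 [EcL Hc]]].
  set (L := d x y) in *.
  assert (HL : 0 <= L).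
  { pose proof (dist_triangle x y x). rewrite dist_refl, (dist_sym y x) in *. unfold L; lra. }
  exists (fun s => c (L * s)). split; [|split; [|split]].
  - apply cont_on_lipschitz with L; [exact HL|]. intros s t Hs Ht.
    rewrite Hc by nra. replace (L * s - L * t) with (L * (s - t)) by ring.
    rewrite Rabs_mult, (Rabs_pos_eq L) by lra. lra.
  - rewrite Rmult_0_r; exact Ec0.
  - rewrite Rmult_1_r; exact EcL.
  - intros s Hs. unfold outside_ball. set (u := L * s).
    assert (Hu : 0 <= u <= L) by (unfold u; nra).
    assert (D1 : d x (c u) = u).
    { rewrite <- Ec0 at 1. rewrite Hc by lra. rewrite Rabs_left1 by lra. lra. }
    assert (D2 : d (c u) y = L - u).
    { rewrite <- EcL at 1. rewrite Hc by lra. rewrite Rabs_left1 by lra. lra. }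
    pose proof (dist_triangle x0 (c u) x). pose proof (dist_triangle x0 (c u) y).
    rewrite (dist_sym (c u) x) in *. unfold gprod in Hr. fold L in Hr. lra.
Qed.

Lemma chain_min_path r x l y : r <= chain_min d x0 x l y -> path_conn d (outside_ball d x0 r) x y.
Proof.
  revert x; induction l as [|z l IH]; intros x H; simpl in H.
  - apply geodesic_path_outside. exact H.
  - apply path_conn_trans with z.
    + apply geodesic_path_outside. eapply Rle_trans; [exact H | apply Rmin_l].
    + apply IH. eapply Rle_trans; [exact H | apply Rmin_r].
Qed.

Lemma gprod'_path r x y : r < gp' x y -> path_conn d (outside_ball d x0 r) x y.
Proof.
  intros H. destruct (lt_gprod'_chain x y r H) as [l Hl].
  apply chain_min_path with l. lra.
Qed.

Local Notation f := (eaf d x0).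
Local Notation rep := (@TX_rep X d x0).
Local Notation dT := (dstar d x0).
Local Notation t0 := (eaf d x0 x0).

Lemma eaf_TX_rep A : f (rep A) = A.
Proof.
  destruct A as [A HA]. unfold eaf, TX_rep. apply subset_eq_compat. simpl.
  symmetry. exact (proj2_sig (constructive_indefinite_description _ HA)).
Qed.

Lemma dprime_TX_rep_eaf x : dp (rep (f x)) x = 0.
Proof.
  unfold TX_rep. simpl.
  destruct (constructive_indefinite_description _ _) as [y Hy]. simpl.
  assert (E : eclass d x0 x y) by (rewrite Hy; apply dprime_diag).
  rewrite dprime_sym. exact E.
Qed.

Lemma dstar_eaf x y : dT (f x) (f y) = dp x y.
Proof.
  unfold dstar. rewrite (dprime_eq_l _ _ _ (dprime_TX_rep_eaf x)).
  rewrite dprime_sym, (dprime_eq_l _ _ _ (dprime_TX_rep_eaf y)).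
  apply dprime_sym.
Qed.

Lemma dstar_base A : dT t0 A = nx (rep A).
Proof.
  rewrite <- (eaf_TX_rep A), dstar_eaf, eaf_TX_rep. apply dprime_base.
Qed.

Lemma gprod_dstar A B : gprod dT t0 A B = gp' (rep A) (rep B).
Proof.
  unfold gprod. rewrite !dstar_base. unfold dstar. rewrite gprod'_dprime. lra.
Qed.

Lemma gprod_dstar_eaf_r A y : gprod dT t0 A (f y) = gp' (rep A) y.
Proof.
  rewrite gprod_dstar, !(gprod'_sym (rep A)).
  apply gprod'_eq_l, dprime_TX_rep_eaf.
Qed.

Lemma gprod_dstar_eaf x y : gprod dT t0 (f x) (f y) = gp' x y.
Proof.
  rewrite gprod_dstar_eaf_r. apply gprod'_eq_l, dprime_TX_rep_eaf.
Qed.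

Lemma cont_on_eaf I g : cont_on d I g -> cont_on dT I (fun t => f (g t)).
Proof.
  apply cont_on_nonexpansive. intros x y. rewrite dstar_eaf. apply dprime_le_dist.
Qed.

Lemma path_conn_eaf r x y :
  path_conn d (outside_ball d x0 r) x y -> path_conn dT (outside_ball dT t0 r) (f x) (f y).
Proof.
  intros [c [Cc [E0 [E1 Sc]]]]. exists (fun s => f (c s)). split; [|split; [|split]].
  - apply cont_on_eaf, Cc.
  - rewrite E0; reflexivity.
  - rewrite E1; reflexivity.
  - intros s Hs. unfold outside_ball. rewrite dstar_eaf, dprime_base. apply Sc, Hs.
Qed.

Lemma TX_path_le_gprod r A B :
  path_conn dT (outside_ball dT t0 r) A B -> r <= gprod dT t0 A B.
Proof.
  intros [c [Cc [E0 [E1 Sc]]]]. rewrite gprod_dstar, <- E0, <- E1.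
  apply (le_gprod'_of_path (fun s => rep (c s))); [lra | exact Cc |].
  intros s Hs. rewrite <- dstar_base. apply Sc, Hs.
Qed.

Lemma TX_gprod_path r A B :
  r < gprod dT t0 A B -> path_conn dT (outside_ball dT t0 r) A B.
Proof.
  rewrite gprod_dstar. intros H.
  rewrite <- (eaf_TX_rep A), <- (eaf_TX_rep B).
  apply path_conn_eaf, gprod'_path, H.
Qed.

Local Notation TX_same_end_iff :=
  (same_end_iff_diverges _ _ _ _ TX_path_le_gprod TX_gprod_path).

Lemma proper_ray_eaf g : proper_ray d x0 g -> proper_ray dT t0 (fun t => f (g t)).
Proof.
  intros [Cg Pg]. split; [apply cont_on_eaf, Cg|].
  intros r Hr. destruct (Pg r Hr) as [M HM]. exists M. intros t Ht.
  rewrite dstar_eaf, dprime_base. auto.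
Qed.

Lemma same_end_eaf_iff g1 g2 :
  same_end dT t0 (fun t => f (g1 t)) (fun t => f (g2 t)) <-> same_end d x0 g1 g2.
Proof.
  rewrite TX_same_end_iff, (same_end_iff_diverges _ _ _ _ path_le_gprod' gprod'_path).
  split; apply diverges_ext; intros s s'; rewrite gprod_dstar_eaf; reflexivity.
Qed.

Lemma end_conv_eaf_iff gs g :
  end_conv dT t0 (fun n t => f (gs n t)) (fun t => f (g t)) <-> end_conv d x0 gs g.
Proof.
  rewrite (end_conv_iff_diverges_seq _ _ _ _ TX_path_le_gprod TX_gprod_path).
  rewrite (end_conv_iff_diverges_seq _ _ _ _ path_le_gprod' gprod'_path).
  split; apply diverges_seq_ext; intros n s s'; rewrite gprod_dstar_eaf; reflexivity.
Qed.

Lemma gprod_dstar_sym A B : gprod dT t0 A B = gprod dT t0 B A.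
Proof. rewrite !gprod_dstar. apply gprod'_sym. Qed.

Lemma gprod_dstar_ultra r A B C :
  r <= gprod dT t0 A B -> r <= gprod dT t0 B C -> r <= gprod dT t0 A C.
Proof. rewrite !gprod_dstar. apply gprod'_ultra. Qed.

Lemma path_along_seq (xs : nat -> X) : exists g, cont_on d (fun t => 0 <= t) g /\
  forall t, 0 <= t -> gp' (xs (nat_floor t)) (xs (S (nat_floor t))) - 1 <= nx (g t) /\
    gp' (xs (nat_floor t)) (xs (S (nat_floor t))) - 1 <= gp' (xs (nat_floor t)) (g t).
Proof.
  assert (Hp : forall n, exists c : R -> X,
             cont_on d (fun s => 0 <= s <= 1) c /\ c 0 = xs n /\ c 1 = xs (S n) /\
             forall s, 0 <= s <= 1 -> gp' (xs n) (xs (S n)) - 1 <= nx (c s)).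
  { intros n. destruct (gprod'_path (gp' (xs n) (xs (S n)) - 1) (xs n) (xs (S n)))
      as [c [Cc [E0 [E1 Sc]]]]; [lra|]. exists c. auto. }
  destruct (choice _ Hp) as [p Hpp].
  assert (Hlink : forall n, p n 1 = p (S n) 0).
  { intros n. destruct (Hpp n) as [_ [_ [E1 _]]]. destruct (Hpp (S n)) as [_ [E0 _]]. congruence. }
  exists (concat_paths X p). split; [apply cont_on_concat_paths; [apply Hpp | exact Hlink]|].
  intros t Ht. pose proof (nat_floor_spec t Ht) as Hn. set (n := nat_floor t) in *.
  rewrite (concat_paths_on X p Hlink n t) by lra.
  destruct (Hpp n) as [Cp [E0 [_ Sc]]]. split; [apply Sc; lra|].
  rewrite <- E0 at 2. apply le_gprod'_of_path; [lra | | intros u Hu; apply Sc; lra].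
  apply cont_on_dprime, cont_on_sub with (fun s => 0 <= s <= 1); [intros; lra | exact Cp].
Qed.

Lemma ray_lift b : proper_ray dT t0 b ->
  exists g, proper_ray d x0 g /\ same_end dT t0 b (fun t => f (g t)).
Proof.
  intros Hb. destruct (path_along_seq (fun n => rep (b (INR n)))) as [g [Cg Hg]].
  assert (Hfar : forall r, 0 <= r -> exists t, 0 <= t /\ forall s s', t <= s -> t <= s' ->
            r <= gp' (rep (b s)) (rep (b s'))).
  { intros r Hr. destruct (proper_ray_diverges _ _ _ _ TX_path_le_gprod b Hb r Hr) as [t [Ht Hbt]].
    exists t. split; [exact Ht|]. intros s s' Hs Hs'. rewrite <- gprod_dstar. auto. }
  exists g. split; [split; [exact Cg|] |].
  - intros r Hr. destruct (Hfar (r + 1) ltac:(lra)) as [t [Ht Hbt]].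
    exists (t + 1). intros s Hs Hlt. apply Rnot_lt_le; intro Hgt.
    pose proof (nat_floor_spec s Hs). destruct (Hg s Hs) as [Hfar_g _].
    assert (r + 1 <= gp' (rep (b (INR (nat_floor s)))) (rep (b (INR (S (nat_floor s)))))).
    { apply Hbt; rewrite ?S_INR; lra. }
    lra.
  - rewrite TX_same_end_iff. intros r Hr. destruct (Hfar (r + 2) ltac:(lra)) as [t [Ht Hbt]].
    exists (t + 1). split; [lra|]. intros s s' Hs Hs'. rewrite gprod_dstar_eaf_r.
    pose proof (nat_floor_spec s' ltac:(lra)). destruct (Hg s' ltac:(lra)) as [_ Hclose].
    set (n := nat_floor s') in *.
    assert (r + 2 <= gp' (rep (b (INR n))) (rep (b (INR (S n))))) by (apply Hbt; rewrite ?S_INR; lra).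
    assert (r + 2 <= gp' (rep (b s)) (rep (b (INR n)))) by (apply Hbt; lra).
    apply gprod'_ultra with (rep (b (INR n))); lra.
Qed.

Lemma ends_open_preimage U : ends_open dT t0 U ->
  ends_open d x0 (fun g => proper_ray d x0 g /\ U (fun t => f (g t))).
Proof.
  intros [U1 [U2 U3]]. split; [|split].
  - intros g [Hg _]; exact Hg.
  - intros g g' Hg' Hgg' [Hg HU]. split; [exact Hg'|].
    apply U2 with (fun t => f (g t)); [apply proper_ray_eaf, Hg' | apply same_end_eaf_iff, Hgg' | exact HU].
  - intros gs g Hgs Hg Hc [_ HU].
    destruct (U3 (fun n t => f (gs n t)) (fun t => f (g t))) as [K HK].
    + intros n; apply proper_ray_eaf, Hgs.
    + apply proper_ray_eaf, Hg.
    + apply end_conv_eaf_iff, Hc.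
    + exact HU.
    + exists K. intros n Hn. split; [apply Hgs | apply HK, Hn].
Qed.

Lemma ends_open_image V : ends_open d x0 V ->
  ends_open dT t0 (fun b => proper_ray dT t0 b /\
     exists g, proper_ray d x0 g /\ V g /\ same_end dT t0 b (fun t => f (g t))).
Proof.
  intros [V1 [V2 V3]]. split; [|split].
  - intros b [Hb _]; exact Hb.
  - intros b b' Hb' Hbb' [Hb [g [Hg [HV Hbg]]]]. split; [exact Hb'|].
    exists g. split; [exact Hg|]. split; [exact HV|].
    apply (same_end_trans _ _ _ _ TX_path_le_gprod TX_gprod_path gprod_dstar_ultra) with b;
      [|exact Hbg].
    apply (same_end_sym _ _ _ _ TX_path_le_gprod TX_gprod_path gprod_dstar_sym), Hbb'.
  - intros bs b Hbs Hb Hc [_ [g [Hg [HV Hbg]]]].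
    destruct (choice _ (fun n => ray_lift (bs n) (Hbs n))) as [gs Hgs].
    assert (Hconv : end_conv d x0 gs g).
    { apply end_conv_eaf_iff.
      apply (end_conv_same_end _ _ _ _ TX_path_le_gprod TX_gprod_path gprod_dstar_sym
               gprod_dstar_ultra) with bs b; [exact Hc | intros n; apply Hgs | exact Hbg]. }
    destruct (V3 gs g) as [K HK]; [intros n; apply Hgs | exact Hg | exact Hconv | exact HV |].
    exists K. intros n Hn. split; [apply Hbs|].
    exists (gs n). split; [apply Hgs|]. split; [apply HK, Hn | apply Hgs].
Qed.

End EndApproximatingTree.

Theorem proposition6p20 (X : Type) (d : X -> X -> R) (x0 : X)
  (Hmet : is_metric d) (Hprop : proper_space d) (Hgeo : geodesic d) :
  let f := eaf d x0 in
  let dT := dstar d x0 in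
  let t0 := f x0 in
  (* f o gamma is a proper ray in T_X *)
  (forall g, proper_ray d x0 g -> proper_ray dT t0 (fun t => f (g t))) /\
  (* F is well defined *)
  (forall g1 g2, proper_ray d x0 g1 -> proper_ray d x0 g2 -> same_end d x0 g1 g2 ->
     same_end dT t0 (fun t => f (g1 t)) (fun t => f (g2 t))) /\
  (* F is injective *)
  (forall g1 g2, proper_ray d x0 g1 -> proper_ray d x0 g2 ->
     same_end dT t0 (fun t => f (g1 t)) (fun t => f (g2 t)) -> same_end d x0 g1 g2) /\
  (* F is surjective *)
  (forall b, proper_ray dT t0 b ->
     exists g, proper_ray d x0 g /\ same_end dT t0 b (fun t => f (g t))) /\
  (* F is continuous *)
  (forall U, ends_open dT t0 U ->
     ends_open d x0 (fun g => proper_ray d x0 g /\ U (fun t => f (g t)))) /\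
  (* F^{-1} is continuous *)
  (forall V, ends_open d x0 V ->
     ends_open dT t0 (fun b => proper_ray dT t0 b /\
        exists g, proper_ray d x0 g /\ V g /\ same_end dT t0 b (fun t => f (g t)))).
Proof.
  intros f dT t0. split; [|split; [|split; [|split; [|split]]]].
  - exact (proper_ray_eaf X d x0 Hmet).
  - intros g1 g2 _ _. apply (same_end_eaf_iff X d x0 Hmet Hgeo).
  - intros g1 g2 _ _. apply (same_end_eaf_iff X d x0 Hmet Hgeo).
  - exact (ray_lift X d x0 Hmet Hgeo).
  - exact (ends_open_preimage X d x0 Hmet Hgeo).
  - exact (ends_open_image X d x0 Hmet Hgeo).
Qed.
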